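(* Every $5$-divisible spanning set $\mathcal{S}$ of $25$ points in $\mathrm{PG}(3,5)$ is a $2$-cylinder, i.e. the union of the point sets $L_i\setminus\{F\}$, $i=1,\dots,5$, of five distinct lines $L_1,\dots,L_5$ through a common point $F$ (with $F$ removed).
   Context: $\mathrm{PG}(3,q)$ is the projective space of $\mathbb{F}_q^4$; points, lines and planes are subspaces of dimension $1,2,3$. A set $\mathcal{S}$ of points is spanning if it spans $\mathbb{F}_q^4$ (is not contained in a plane), and it is $q$-divisible if $|\mathcal{S}\cap H|\equiv|\mathcal{S}|\pmod q$ for every plane $H$. *)

From mathcomp Require Import all_boot all_algebra.
Set Implicit Arguments. Unset Strict Implicit. Unset Printing Implicit Defensive.
Import GRing.Theory.
Local Open Scope ring_scope.

(* PG(3,q) over the field F = 'F_q: subspaces of F^4 are represented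
   canonically by their row-space matrices, i.e. square 4x4 matrices A
   with <<A>>%MS = A (genmx is a canonical representative of the row space). *)
Section PG3.
Variable F : finFieldType.

Definition subsp (k : nat) : {set 'M[F]_4} :=
  [set A : 'M[F]_4 | (<<A>>%MS == A) && (\rank A == k)].

Definition PGpoints := subsp 1.
Definition PGlines  := subsp 2.
Definition PGplanes := subsp 3.

Definition incident (A B : 'M[F]_4) : bool := (A <= B)%MS.

Definition onsub (S : {set 'M[F]_4}) (H : 'M[F]_4) : {set 'M[F]_4} :=
  [set P in S | incident P H].

Definition spanning (S : {set 'M[F]_4}) : bool :=
  \rank (\sum_(P in S) P)%MS == 4%N.

Definition divisible (q : nat) (S : {set 'M[F]_4}) : Prop :=
  forall H, H \in PGplanes -> #|onsub S H| = #|S| %[mod q].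

Definition cylinder (t : nat) (S : {set 'M[F]_4}) : Prop :=
  exists (F0 : 'M[F]_4) (L : 'I_t -> 'M[F]_4),
    [/\ F0 \in PGpoints,
        forall i, L i \in PGlines,
        injective L,
        forall i, incident F0 (L i) &
        S = [set P in PGpoints | (P != F0) && [exists i, incident P (L i)]]].
End PG3.

From mathcomp Require Import all_boot all_algebra.
From mathcomp Require Import zify.
Set Implicit Arguments. Unset Strict Implicit. Unset Printing Implicit Defensive.

(* The heart of the proof is a counting argument valid in any incidence
   structure of points, lines and planes with the parameters of PG(3,5)
   (section IncidenceStructure).  Writing nP h and nL m for the number of
   points of S on a plane h and on a line m, double counting over the planes
   through a point of S and through a line gives the excess identities
   sum (nP h - 5) = 20 and 5 nL m - 5.  If no line carried 5 points of S,
   every plane would carry 0, 5 or 10 points, there would be exactly ten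
   planes with 10 points, and each of them would contain ten 3-secants lying
   in ten distinct further rich planes: a contradiction.  So some line L has
   5 points of S and a hole C; the excess identities then force the join of
   C with any point of S off L to be full as well, and these full lines
   through C are exactly five. *)

Lemma card_in_sum (T : finType) (A : {pred T}) (P : pred T) :
  #|[set x in A | P x]| = \sum_(x in A) P x.
Proof.
rewrite -sum1_card [LHS]big_mkcond [RHS]big_mkcond; apply: eq_bigr => x _.
by rewrite inE; case: (x \in A); case: (P x).
Qed.

Lemma card_sum (T : finType) (P : pred T) : #|[set x | P x]| = \sum_x P x.
Proof. by rewrite -sum1_card big_mkcond; apply: eq_bigr => x _; rewrite inE; case: (P x). Qed.

Lemma sum_indicator (T : finType) (P Q : pred T) :
  \sum_(i | P i) (Q i : nat) = #|[set i | P i && Q i]|.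
Proof. by rewrite card_sum [LHS]big_mkcond; apply: eq_bigr => i _; case: (P i). Qed.

Lemma double_count (I J : finType) (A : {set I}) (Q : I -> J -> bool) :
  \sum_(i in A) #|[set j | Q i j]| = \sum_j #|[set i in A | Q i j]|.
Proof.
rewrite (eq_bigr (fun i => \sum_j (Q i j : nat))); last by move=> i _; rewrite card_sum.
by rewrite exchange_big; apply: eq_bigr => j _; rewrite card_in_sum.
Qed.

Lemma sum_const_card (I : finType) (P : pred I) (c : nat) :
  \sum_(i | P i) c = c * #|[set i | P i]|.
Proof. by rewrite -sum1dep_card big_distrr; apply: eq_bigr => i _ /=; rewrite muln1. Qed.

Lemma sum_split_const (I : finType) (P : pred I) (f : I -> nat) (c : nat) :
  (forall i, P i -> c <= f i) ->
  \sum_(i | P i) f i = \sum_(i | P i) (f i - c) + c * #|[set i | P i]|.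
Proof.
move=> cf; rewrite -sum_const_card -big_split.
by apply: eq_bigr => i Pi /=; rewrite subnK // cf.
Qed.

Lemma mul_eq_indicator (n k : nat) : n * (n == k) = k * (n == k).
Proof. by case: eqP => [->|]; rewrite ?muln0. Qed.

Lemma card_setD1_pred (T : finType) (A : {set T}) (P : pred T) p : p \in A -> P p ->
  #|[set x in A | P x & x != p]| = #|[set x in A | P x]| - 1.
Proof.
move=> pA Pp; have := cardsD1 p [set x in A | P x]; rewrite inE pA Pp /=.
have -> : [set x in A | P x] :\ p = [set x in A | P x & x != p].
  by apply/setP => x; rewrite !inE; case: (x == p); rewrite ?andbF ?andbT.
lia.
Qed.

Section IncidenceStructure.

(* An incidence structure of points, planes and lines with the counting
   parameters of PG(3,5): inc x h says that x lies on the plane h, onl x m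
   that x lies on the line m. *)
Variables (Pt Pl Ln : finType) (inc : Pt -> Pl -> bool) (onl : Pt -> Ln -> bool).

Definition within (m : Ln) (h : Pl) : bool := [forall x, onl x m ==> inc x h].

Hypothesis plane_size : forall h, #|[set x | inc x h]| = 31.
Hypothesis planes_through_point : forall p, #|[set h | inc p h]| = 31.
Hypothesis line_size : forall m, #|[set x | onl x m]| = 6.
Hypothesis join_unique : forall x y, x != y -> #|[set m | onl x m && onl y m]| = 1.
Hypothesis line_in_plane : forall m h x y,
  x != y -> onl x m -> onl y m -> inc x h -> inc y h -> within m h.
Hypothesis planes_through_line : forall m, #|[set h | within m h]| = 6.
Hypothesis plane_of_line_point : forall m x,
  ~~ onl x m -> #|[set h | within m h && inc x h]| = 1.

Lemma withinP m h x : within m h -> onl x m -> inc x h.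
Proof. by move=> /forallP /(_ x) /implyP. Qed.

Lemma line_uniq x y m m' :
  x != y -> onl x m -> onl y m -> onl x m' -> onl y m' -> m = m'.
Proof.
move=> xy xm ym xm' ym'.
have : #|[set m | onl x m && onl y m]| <= 1 by rewrite join_unique.
by move/card_le1_eqP; apply; rewrite inE ?xm ?ym ?xm' ?ym'.
Qed.

Lemma line_ex x y : x != y -> exists m, onl x m && onl y m.
Proof.
move/join_unique/eqP; rewrite eqn_leq => /andP[_].
by rewrite card_gt0 => /set0Pn [m]; rewrite inE; exists m.
Qed.

Lemma line_minus_point (m : Ln) (x : Pt) : onl x m ->
  #|[set y in [set y | onl y m] | y != x]| = 5.
Proof.
move=> xm; have := cardsD1 x [set y | onl y m]; rewrite inE xm line_size.
have -> : [set y | onl y m] :\ x = [set y in [set y | onl y m] | y != x].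
  by apply/setP => y; rewrite !inE andbC.
lia.
Qed.

Lemma pencil_minus_plane (m : Ln) (h : Pl) : within m h ->
  #|[set h' | within m h' && (h' != h)]| = 5.
Proof.
move=> mh; have := cardsD1 h [set h' | within m h']; rewrite inE mh planes_through_line.
have -> : [set h' | within m h'] :\ h = [set h' | within m h' && (h' != h)].
  by apply/setP => h'; rewrite !inE andbC.
lia.
Qed.

Lemma plane_lines_partition p h (T : {set Pt}) : inc p h ->
  \sum_(m | onl p m && within m h) #|[set x in T | onl x m & x != p]|
  = #|[set x in T | inc x h & x != p]|.
Proof.
move=> ph.
rewrite (eq_bigr (fun m => \sum_(x in T) (onl x m && (x != p) : nat))); last first.
  by move=> m _; rewrite card_in_sum.
rewrite exchange_big card_in_sum; apply: eq_bigr => x _; rewrite sum_indicator.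
case: (eqVneq x p) => [->|xp].
  by rewrite andbF; apply/eqP; rewrite cards_eq0; apply/eqP/setP => m; rewrite !inE !andbF.
have px : p != x by rewrite eq_sym.
case: (boolP (inc x h)) => xh /=.
  rewrite -(join_unique px); apply: eq_card => m; rewrite !inE.
  apply/idP/idP => [/and3P[/andP[-> _] -> _] //|/andP[pm xm]].
  by rewrite pm xm (line_in_plane px pm xm ph xh).
apply/eqP; rewrite cards_eq0; apply/eqP/setP => m; rewrite !inE.
by apply/negbTE/negP => /and3P[/andP[_ hm] xm _]; rewrite (withinP hm xm) in xh.
Qed.

Lemma lines_in_plane p h : inc p h -> #|[set m | onl p m && within m h]| = 6.
Proof.
move=> ph; have := plane_lines_partition setT ph.
rewrite (eq_bigr (fun _ => 5)); last first.
  move=> m /andP[pm _]; rewrite card_setD1_pred ?inE //.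
  by rewrite (_ : #|_| = 6) // -(line_size m); apply: eq_card => x; rewrite !inE.
rewrite card_setD1_pred ?inE // (_ : #|[set x in setT | inc x h]| = 31); last first.
  by rewrite -(plane_size h); apply: eq_card => x; rewrite !inE.
by rewrite sum_const_card; lia.
Qed.

Lemma two_planes_one_line h h' m1 m2 : h != h' ->
  within m1 h -> within m2 h -> within m1 h' -> within m2 h' -> m1 = m2.
Proof.
move=> hh' m1h m2h m1h' m2h'.
have : 1 < #|[set x | onl x m2]| by rewrite line_size.
move/card_gt1P => [x [y [xm ym xy]]]; rewrite !inE in xm ym.
have same_plane z : ~~ onl z m1 -> onl z m2 -> h = h'.
  move=> zm1 zm2; have : #|[set h | within m1 h && inc z h]| <= 1.
    by rewrite plane_of_line_point.
  by move/card_le1_eqP; apply; rewrite inE ?m1h ?m1h' ?(withinP m2h zm2) ?(withinP m2h' zm2).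
have [xm1|/same_plane/(_ xm) hE] := boolP (onl x m1); last by rewrite hE eqxx in hh'.
have [ym1|/same_plane/(_ ym) hE] := boolP (onl y m1); last by rewrite hE eqxx in hh'.
exact: (line_uniq xy xm1 ym1 xm ym).
Qed.

Variable S : {set Pt}.
Hypothesis card_S : #|S| = 25.
Hypothesis div_S : forall h, 5 %| #|[set x in S | inc x h]|.

Definition nP (h : Pl) : nat := #|[set x in S | inc x h]|.
Definition nL (m : Ln) : nat := #|[set x in S | onl x m]|.

Lemma nP_ge5 p h : p \in S -> inc p h -> 5 <= nP h.
Proof.
move=> pS ph; apply: dvdn_leq (div_S h).
by rewrite card_gt0; apply/set0Pn; exists p; rewrite inE pS.
Qed.

Lemma nL_ge1 p m : p \in S -> onl p m -> 1 <= nL m.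
Proof. by move=> pS pm; rewrite card_gt0; apply/set0Pn; exists p; rewrite inE pS. Qed.

Lemma pencil_sum m : \sum_(h | within m h) nP h = 25 + 5 * nL m.
Proof.
rewrite (eq_bigr (fun h => \sum_(x in S) (inc x h : nat))); last first.
  by move=> h _; rewrite /nP card_in_sum.
rewrite exchange_big /= (eq_bigr (fun x => 1 + 5 * onl x m)); last first.
  move=> x _; rewrite sum_indicator; case: (boolP (onl x m)) => xm /=.
    apply: (@eq_trans _ _ 6) => //; rewrite -(planes_through_line m).
    apply: eq_card => h; rewrite !inE.
    by case hm: (within m h); rewrite ?(withinP hm xm).
  by rewrite plane_of_line_point.
by rewrite big_split /= sum1_card card_S -big_distrr /= -card_in_sum.
Qed.

Lemma star_sum p : p \in S -> \sum_(h | inc p h) nP h = 175.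
Proof.
move=> pS.
rewrite (eq_bigr (fun h => \sum_(x in S) (inc x h : nat))); last first.
  by move=> h _; rewrite /nP card_in_sum.
rewrite exchange_big /= (bigD1 p) //= sum_indicator.
have -> : #|[set h | inc p h && inc p h]| = 31.
  by rewrite -(planes_through_point p); apply: eq_card => h; rewrite !inE andbb.
rewrite (eq_bigr (fun _ => 6)); last first.
  move=> x /andP[_ xp]; rewrite sum_indicator.
  have px : p != x by rewrite eq_sym.
  have [m /andP[pm xm]] := line_ex px.
  rewrite -(planes_through_line m); apply: eq_card => h; rewrite !inE.
  apply/andP/idP => [[ph xh]|hm]; first exact: (line_in_plane px pm xm).
  by rewrite (withinP hm pm) (withinP hm xm).
rewrite sum_const_card.
have -> : #|[set x | (x \in S) && (x != p)]| = 24.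
  have := cardsD1 p S; rewrite pS card_S.
  have -> : S :\ p = [set x | (x \in S) && (x != p)].
    by apply/setP => x; rewrite !inE andbC.
  lia.
by [].
Qed.

Lemma point_excess p : p \in S -> \sum_(h | inc p h) (nP h - 5) = 20.
Proof.
move=> pS; have := star_sum pS.
rewrite (sum_split_const (c := 5)) => [|h]; last exact: nP_ge5.
by rewrite planes_through_point; lia.
Qed.

Lemma line_excess p m : p \in S -> onl p m ->
  \sum_(h | within m h) (nP h - 5) = 5 * nL m - 5.
Proof.
move=> pS pm; have := pencil_sum m.
rewrite (sum_split_const (c := 5)) => [|h hm]; last exact: nP_ge5 pS (withinP hm pm).
by rewrite planes_through_line; lia.
Qed.

(* The excess through a line is part of the excess through each of its points,
   so no line carries more than 5 points of S. *)
Lemma nL_le5 p m : p \in S -> onl p m -> nL m <= 5.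
Proof.
move=> pS pm.
have : \sum_(h | within m h) (nP h - 5) <= \sum_(h | inc p h) (nP h - 5).
  rewrite [X in _ <= X]big_mkcond [X in X <= _]big_mkcond /=.
  by apply: leq_sum => h _; case hm: (within m h); rewrite ?(withinP hm pm).
by rewrite (line_excess pS pm) (point_excess pS); lia.
Qed.

Lemma nP_le_line p m h : p \in S -> onl p m -> within m h -> nP h <= 5 * nL m.
Proof.
move=> pS pm hm; have := line_excess pS pm; rewrite (bigD1 h) //=.
by have := nP_ge5 pS (withinP hm pm); have := nL_ge1 pS pm; lia.
Qed.

Lemma full_line_other_planes L p h : p \in S -> onl p L -> nL L = 5 ->
  inc p h -> ~~ within L h -> nP h = 5.
Proof.
move=> pS pL fullL ph Lh.
have := point_excess pS; rewrite (bigID (within L)) /=.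
have -> : \sum_(i | inc p i && within L i) (nP i - 5) = 20.
  rewrite -[RHS](_ : 5 * nL L - 5 = 20); last by rewrite fullL.
  rewrite -(line_excess pS pL); apply: eq_bigl => i.
  by case hi: (within L i); rewrite ?andbT ?andbF // (withinP hi pL).
move=> E; have /eqP : \sum_(i | inc p i && ~~ within L i) (nP i - 5) = 0 by lia.
rewrite sum_nat_eq0 => /forallP /(_ h); rewrite ph Lh /=.
by have := nP_ge5 pS ph; lia.
Qed.

(* The lines of h through a point p of S partition the rest of S on h. *)
Lemma plane_line_excess p h : p \in S -> inc p h ->
  \sum_(m | onl p m && within m h) (nL m - 1) = nP h - 1.
Proof.
move=> pS ph; have := plane_lines_partition S ph.
rewrite card_setD1_pred // => <-; apply: eq_bigr => m /andP[pm _].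
by rewrite card_setD1_pred.
Qed.

Lemma plane_line_sum p h : p \in S -> inc p h ->
  \sum_(m | onl p m && within m h) nL m = nP h + 5.
Proof.
move=> pS ph.
rewrite (sum_split_const (c := 1)) => [|m /andP[pm _]]; last exact: nL_ge1 pS pm.
rewrite plane_line_excess // lines_in_plane //.
by have := nP_ge5 pS ph; lia.
Qed.

Lemma plane_flag_count h (w : Ln -> nat) :
  \sum_(p in [set x in S | inc x h]) \sum_(m | onl p m && within m h) w m
  = \sum_(m | within m h) nL m * w m.
Proof.
rewrite (eq_bigr (fun p => \sum_m ((onl p m && within m h) * w m))); last first.
  move=> p _; rewrite big_mkcond; apply: eq_bigr => m _.
  by case: (onl p m && within m h); rewrite ?mul1n ?mul0n.
rewrite exchange_big /= [RHS]big_mkcond; apply: eq_bigr => m _.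
rewrite -big_distrl /=; case: (boolP (within m h)) => hm /=.
  congr (_ * _); rewrite /nL card_in_sum big_mkcond [RHS]big_mkcond.
  apply: eq_bigr => x _; rewrite !inE andbT; case: (x \in S) => //=.
  by case xm: (onl x m); [rewrite (withinP hm xm) | case: (inc x h)].
by rewrite big1 // => x _; rewrite andbF.
Qed.

Section NoFullLine.

Hypothesis no_full : forall m, nL m != 5.

Lemma nL_le4 m : nL m <= 4.
Proof.
case: (posnP (nL m)) => [->//|]; rewrite card_gt0 => /set0Pn [p].
by rewrite inE => /andP[pS pm]; have := nL_le5 pS pm; have := no_full m; lia.
Qed.

(* A plane with 15 points of S would contain exactly two 4-secants through
   each of its 15 points, i.e. 30/4 of them. *)
Lemma no_plane_15 h : nP h != 15.
Proof.
apply/eqP => h15.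
have two_4lines p : p \in [set x in S | inc x h] ->
    \sum_(m | onl p m && within m h) (nL m == 4 : nat) = 2.
  rewrite inE => /andP[pS ph]; have := plane_line_sum pS ph.
  rewrite h15 (eq_bigr (fun m => 3 + (nL m == 4))); last first.
    move=> m /andP[pm hm]; have := nP_le_line pS pm hm; rewrite h15.
    by have := nL_le4 m; case: (nL m == 4) /eqP; lia.
  by rewrite big_split /= sum_const_card lines_in_plane //; lia.
have := plane_flag_count h (fun m => nL m == 4).
rewrite (eq_bigr (fun _ => 2)) // sum_nat_const -/(nP h) h15.
rewrite (eq_bigr (fun m => 4 * (nL m == 4))) => [|m _]; last exact: mul_eq_indicator.
by rewrite -big_distrr /=; lia.
Qed.

Lemma nP_cases h : [\/ nP h = 0, nP h = 5 | nP h = 10].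
Proof.
case: (posnP (nP h)) => [->|]; first by constructor 1.
rewrite card_gt0 => /set0Pn [p]; rewrite inE => /andP[pS ph].
have : \sum_(m | onl p m && within m h) nL m <= \sum_(m | onl p m && within m h) 4.
  by apply: leq_sum => m _; apply: nL_le4.
rewrite plane_line_sum // sum_const_card lines_in_plane //.
have /dvdnP [k Hk] := div_S h; rewrite -/(nP h) in Hk.
have := no_plane_15 h; have := nP_ge5 pS ph.
rewrite Hk; case: k {Hk} => [|[|[|[|k]]]]; try lia.
- by constructor 2; lia.
- by constructor 3; lia.
Qed.

Lemma excess_rich p h : p \in S -> inc p h -> nP h - 5 = 5 * (nP h == 10).
Proof. by move=> pS ph; have := nP_ge5 pS ph; case: (nP_cases h) => ->; lia. Qed.

Lemma rich_through p : p \in S -> #|[set h | inc p h && (nP h == 10)]| = 4.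
Proof.
move=> pS; have := point_excess pS.
rewrite (eq_bigr (fun h => 5 * (nP h == 10))) => [|h]; last exact: excess_rich.
by rewrite -big_distrr /= sum_indicator; lia.
Qed.

Lemma rich_count : #|[set h | nP h == 10]| = 10.
Proof.
have := double_count S (fun p h => inc p h && (nP h == 10)).
rewrite (eq_bigr (fun _ => 4)) => [|p]; last exact: rich_through.
rewrite sum_nat_const card_S.
rewrite (eq_bigr (fun h => 10 * (nP h == 10))); last first.
  move=> h _; case: (eqVneq (nP h) 10) => [h10|_] /=.
    by rewrite muln1 -h10; apply: eq_card => x; rewrite !inE andbT.
  by apply/eqP; rewrite cards_eq0; apply/eqP/setP => x; rewrite !inE !andbF.
by rewrite -big_distrr /= -card_sum; lia.
Qed.

Section RichPlane.

(* A rich plane h0 leads to the contradiction: its secants carry 2 or 3 points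
   of S, it contains ten 3-secants, and each of these lies in a second rich
   plane, while only 9 other rich planes exist. *)
Variable h0 : Pl.
Hypothesis rich_h0 : nP h0 = 10.

Lemma rich_point_lines p : p \in [set x in S | inc x h0] ->
  \sum_(m | onl p m && within m h0) (nL m - 2) = 3.
Proof.
rewrite inE => /andP[pS ph]; have := plane_line_sum pS ph.
rewrite (sum_split_const (c := 2)) => [|m /andP[pm hm]]; last first.
  by have := nP_le_line pS pm hm; rewrite rich_h0; lia.
by rewrite lines_in_plane // rich_h0; lia.
Qed.

Lemma rich_point_4lines p : p \in [set x in S | inc x h0] ->
  \sum_(m | onl p m && within m h0) (nL m == 4 : nat) <= 1.
Proof.
move=> pS; have := rich_point_lines pS.
have : \sum_(m | onl p m && within m h0) 2 * (nL m == 4) <=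
       \sum_(m | onl p m && within m h0) (nL m - 2).
  by apply: leq_sum => m _; case: eqP => [->|].
by rewrite -big_distrr /=; lia.
Qed.

(* Double counting the flags of h0 gives 3 N3 + 8 N4 = 30 and 4 N4 <= 10 for
   the numbers N3, N4 of 3- and 4-secants in h0, so N3 = 10. *)
Lemma rich_plane_secants :
  #|[set m | within m h0 && (nL m == 3)]| = 10.
Proof.
have E := plane_flag_count h0 (fun m => nL m - 2).
rewrite (eq_bigr (fun _ => 3)) ?sum_nat_const in E;
  last exact: rich_point_lines.
have F := plane_flag_count h0 (fun m => nL m == 4).
have : \sum_(p in [set x in S | inc x h0])
          \sum_(m | onl p m && within m h0) (nL m == 4 : nat) <= 10 * 1.
  by rewrite muln1 -rich_h0 /nP -sum1_card; apply: leq_sum => p; apply: rich_point_4lines.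
rewrite F {F} -/(nP h0) rich_h0 in E *.
rewrite (eq_bigr (fun m => 3 * (nL m == 3) + 8 * (nL m == 4))) in E; last first.
  by move=> m _; have := nL_le4 m; case: (nL m) => [|[|[|[|[|k]]]]].
rewrite (eq_bigr (fun m => 4 * (nL m == 4))) => [|m _]; last exact: mul_eq_indicator.
rewrite big_split /= -!big_distrr /= !sum_indicator in E *.
lia.
Qed.

Lemma secant_second_rich m : within m h0 -> nL m = 3 ->
  exists h, [&& within m h, nP h == 10 & h != h0].
Proof.
move=> mh0 m3.
have : 0 < nL m by rewrite m3.
rewrite card_gt0 => /set0Pn [q]; rewrite inE => /andP[qS qm].
have := line_excess qS qm; rewrite m3.
rewrite (eq_bigr (fun h => 5 * (nP h == 10))) => [|h hm]; last first.
  exact: excess_rich qS (withinP hm qm).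
rewrite -big_distrr /= sum_indicator => E.
have : 1 < #|[set h | within m h && (nP h == 10)]| by lia.
move/card_gt1P => [h1 [h2 [h1m h2m h12]]].
move: h1m h2m; rewrite !inE => /andP[mh1 r1] /andP[mh2 r2].
case: (eqVneq h1 h0) => [h10|h10]; last by exists h1; rewrite mh1 r1.
by exists h2; rewrite mh2 r2 -h10 eq_sym.
Qed.

(* Sending each 3-secant of h0 to its second rich plane is injective, since
   two planes share at most one line: 10 secants, only 9 such planes. *)
Lemma rich_plane_false : False.
Proof.
pose T3 := [set m | within m h0 && (nL m == 3)].
pose other m := odflt h0 [pick h | [&& within m h, nP h == 10 & h != h0]].
have otherP m : m \in T3 -> [&& within m (other m), nP (other m) == 10 & other m != h0].
  rewrite inE => /andP[mh0 /eqP m3]; rewrite /other; case: pickP => [//|none].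
  by have [h Hh] := secant_second_rich mh0 m3; rewrite none in Hh.
have inj_other : {in T3 &, injective other}.
  move=> m1 m2 m1T m2T E.
  have /and3P[s1 _ ne] := otherP _ m1T; have /and3P[s2 _ _] := otherP _ m2T.
  move: m1T m2T; rewrite !inE => /andP[m1h0 _] /andP[m2h0 _].
  by apply: (two_planes_one_line ne s1 _ m1h0 m2h0); rewrite E.
have : other @: T3 \subset [set h | nP h == 10] :\ h0.
  by apply/subsetP => _ /imsetP [m mT ->]; have /and3P[_ r ne] := otherP _ mT; rewrite !inE r ne.
move/subset_leq_card; rewrite (card_in_imset inj_other) rich_plane_secants.
by have := cardsD1 h0 [set h | nP h == 10]; rewrite !inE rich_h0 rich_count; lia.
Qed.

End RichPlane.

Lemma no_full_false : False.
Proof.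
have : 0 < #|S| by rewrite card_S.
rewrite card_gt0 => /set0Pn [p pS].
have : 0 < #|[set h | inc p h && (nP h == 10)]| by rewrite rich_through.
rewrite card_gt0 => /set0Pn [h0]; rewrite inE => /andP[_ /eqP rich].
exact: rich_plane_false rich.
Qed.

End NoFullLine.

Lemma exists_full_line : exists L, nL L = 5.
Proof.
case: (boolP [exists L, nL L == 5]) => [/existsP [L /eqP]|none]; first by exists L.
exfalso; apply: no_full_false => m; apply: contra none => m5.
by apply/existsP; exists m.
Qed.

Lemma full_line_hole L : nL L = 5 -> exists C, onl C L && (C \notin S).
Proof.
move=> fullL; apply/existsP; apply: contraT; rewrite negb_exists => /forallP none.
have : [set x | onl x L] \subset [set x in S | onl x L].
  apply/subsetP => x; rewrite !inE => xL; rewrite xL andbT.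
  by have := none x; rewrite xL negbK.
by move/subset_leq_card; rewrite line_size -/(nL L) fullL.
Qed.

Lemma full_line_points m C : nL m = 5 -> onl C m -> C \notin S ->
  forall x, onl x m -> x != C -> x \in S.
Proof.
move=> fullm Cm CS x xm xC.
have E : [set x in S | onl x m] = [set x | onl x m] :\ C.
  apply/eqP; rewrite eqEcard; apply/andP; split.
    apply/subsetP => y; rewrite !inE => /andP[yS ym]; rewrite ym andbT.
    by apply: contraNneq CS => <-.
  by have := cardsD1 C [set x | onl x m]; rewrite inE Cm line_size -/(nL m) fullm; lia.
have : x \in [set x | onl x m] :\ C by rewrite !inE xC xm.
by rewrite -E inE => /andP[].
Qed.

Section FullLine.

Variables (L : Ln) (C : Pt).
Hypotheses (full_L : nL L = 5) (CL : onl C L) (CS : C \notin S).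

Definition join (x y : Pt) : Ln := odflt L [pick m | onl x m && onl y m].

Lemma joinP x y : x != y -> onl x (join x y) && onl y (join x y).
Proof.
move=> xy; rewrite /join; case: pickP => [m //|none].
by have [m xym] := line_ex xy; rewrite none in xym.
Qed.

Lemma hole_neq x : x \in S -> x != C.
Proof. by apply: contraTneq => ->. Qed.

Section PointOffL.

Variables (R : Pt) (h0 : Pl).
Hypotheses (RS : R \in S) (RL : ~~ onl R L) (Lh0 : within L h0) (Rh0 : inc R h0).

Lemma plane_LR_uniq h : within L h -> inc R h -> h = h0.
Proof.
move=> Lh Rh; have : #|[set h | within L h && inc R h]| <= 1.
  by rewrite plane_of_line_point.
by move/card_le1_eqP; apply; rewrite inE ?Lh ?Rh ?Lh0 ?Rh0.
Qed.

Lemma R_neq_L x : onl x L -> R != x.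
Proof. by move=> xL; apply: contraNneq RL => ->. Qed.

Lemma join_in_plane x : onl x L -> within (join R x) h0.
Proof.
move=> xL; have /andP[Rm xm] := joinP (R_neq_L xL).
exact: line_in_plane (R_neq_L xL) Rm xm Rh0 (withinP Lh0 xL).
Qed.

(* The planes through the line Rx other than h0 carry 5 points of S each,
   so the pencil of Rx determines its number of points. *)
Lemma join_weight x : onl x L -> x != C -> 5 * nL (join R x) = nP h0.
Proof.
move=> xL xC; have xS := full_line_points full_L CL CS xL xC.
have /andP[Rm xm] := joinP (R_neq_L xL).
have := pencil_sum (join R x); rewrite (bigD1 h0) ?join_in_plane //=.
rewrite (eq_bigr (fun _ => 5)) => [|h /andP[mh hh0]]; last first.
  apply: (full_line_other_planes xS xL full_L (withinP mh xm)).
  by apply: contra hh0 => Lh; rewrite (plane_LR_uniq Lh (withinP mh Rm)).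
rewrite sum_const_card pencil_minus_plane ?join_in_plane //.
by rewrite addnC => /addnI.
Qed.

Lemma join_inj : {in [set x | onl x L] &, injective (join R)}.
Proof.
move=> x y; rewrite !inE => xL yL E; apply/eqP/negP => /negP xy.
have /andP[_ xm] := joinP (R_neq_L xL); have /andP[Rm ym] := joinP (R_neq_L yL).
rewrite -E in ym Rm.
by move: RL; rewrite -(line_uniq xy xm ym xL yL) Rm.
Qed.

Lemma joins_in_plane :
  [set join R x | x in [set x | onl x L]] = [set m | onl R m && within m h0].
Proof.
apply/eqP; rewrite eqEcard; apply/andP; split.
  apply/subsetP => m /imsetP [x]; rewrite inE => xL ->.
  by rewrite inE join_in_plane // andbT; case/andP: (joinP (R_neq_L xL)).
by rewrite (card_in_imset join_inj) lines_in_plane // line_size.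
Qed.

Lemma joins_off_hole_excess :
  \sum_(x in [set x | onl x L] | x != C) (nL (join R x) - 1) = nP h0 - 5.
Proof.
apply/eqP; rewrite -(eqn_pmul2l (isT : 0 < 5)) big_distrr /=.
rewrite (eq_bigr (fun _ => nP h0 - 5)) => [|x /andP[xL xC]]; last first.
  by rewrite inE in xL; rewrite mulnBr (join_weight xL xC).
by rewrite sum_const_card line_minus_point // mulnC.
Qed.

(* Summing the excesses of the lines through R in h0, the five joins with
   points of S on L account for nP h0 - 5, leaving 4 for the join with C. *)
Lemma join_hole_full : nL (join R C) = 5.
Proof.
have := plane_line_excess RS Rh0.
rewrite (eq_bigl (fun m => m \in [set join R x | x in [set x | onl x L]])) => [|m];
  last by rewrite joins_in_plane inE.
rewrite big_imset /=; last exact: join_inj.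
rewrite (bigD1 C) ?inE //= joins_off_hole_excess.
have /andP[RRC _] := joinP (hole_neq RS).
by have := nL_ge1 RS RRC; have := nP_ge5 RS Rh0; lia.
Qed.

End PointOffL.

Lemma point_on_full_line R : R \in S -> exists m, [&& onl C m, nL m == 5 & onl R m].
Proof.
move=> RS; have [RL|RL] := boolP (onl R L); first by exists L; rewrite CL full_L RL.
have : 0 < #|[set h | within L h && inc R h]| by rewrite plane_of_line_point.
rewrite card_gt0 => /set0Pn [h0]; rewrite inE => /andP[Lh0 Rh0].
have /andP[RRC CRC] := joinP (hole_neq RS).
by exists (join R C); rewrite CRC RRC (join_hole_full RS RL Lh0 Rh0).
Qed.

Definition full_lines : {set Ln} := [set m | onl C m && (nL m == 5)].

(* They partition S into blocks of 5 points. *)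
Lemma card_full_lines : #|full_lines| = 5.
Proof.
have := double_count S (fun R m => (m \in full_lines) && onl R m).
rewrite (eq_bigr (fun _ => 1)) => [|R RS]; last first.
  apply/eqP; rewrite eqn_leq; apply/andP; split.
    apply/card_le1_eqP => m1 m2; rewrite !inE => /andP[/andP[C1 _] R1] /andP[/andP[C2 _] R2].
    exact: (line_uniq (hole_neq RS) R2 C2 R1 C1).
  have [m /and3P[Cm m5 Rm]] := point_on_full_line RS.
  by rewrite card_gt0; apply/set0Pn; exists m; rewrite !inE Cm m5 Rm.
rewrite sum_nat_const card_S.
rewrite (eq_bigr (fun m => 5 * (m \in full_lines))) => [|m _]; last first.
  case: (boolP (m \in full_lines)) => [mF|_]; last first.
    by apply/eqP; rewrite cards_eq0; apply/eqP/setP => x; rewrite !inE andbF.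
  move: (mF); rewrite inE => /andP[_ /eqP m5]; rewrite -[5 * true]/5 -m5.
  by apply: eq_card => x; rewrite !inE.
by rewrite -big_distrr /= -card_sum (eq_card (B := full_lines)) => [|m]; rewrite ?inE; lia.
Qed.

End FullLine.

Theorem cylinder_structure : exists (C : Pt) (ms : 'I_5 -> Ln),
  [/\ injective ms, forall i, onl C (ms i) &
      forall x, (x \in S) = (x != C) && [exists i, onl x (ms i)]].
Proof.
have [L fullL] := exists_full_line.
have [C /andP[CL CS]] := full_line_hole fullL.
have cardF := card_full_lines fullL CL CS.
pose ms i := enum_val (cast_ord (esym cardF) i).
have msF i : ms i \in full_lines C by apply: enum_valP.
exists C, ms; split.
- by move=> i j /enum_val_inj /cast_ord_inj.
- by move=> i; have := msF i; rewrite inE => /andP[].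
move=> x; apply/idP/andP => [xS|[xC /existsP [i xm]]].
  split; first exact: (hole_neq CS xS).
  have [m /and3P[Cm m5 xm]] := point_on_full_line fullL CL CS xS.
  have mF : m \in full_lines C by rewrite inE Cm m5.
  apply/existsP; exists (cast_ord cardF (enum_rank_in mF m)).
  by rewrite /ms cast_ordK enum_rankK_in.
have := msF i; rewrite inE => /andP[Cm /eqP m5].
exact: (full_line_points m5 Cm CS xm xC).
Qed.

End IncidenceStructure.

(* Vectors of F_5^4 with coordinates in {0,..,4}, as quadruples of naturals;
   arithmetic is reduced modulo 5. *)
Definition vec := (nat * nat * nat * nat)%type.
Definition v0 : vec := (0, 0, 0, 0).
Definition digits : seq nat := iota 0 5.
Definition coords (v : vec) : seq nat := let: (a, b, c, d) := v in [:: a; b; c; d].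
Definition digit_pairs : seq (nat * nat) := [seq (a, b) | a <- digits, b <- digits].
Definition all_vecs : seq vec :=
  [seq (ab.1, ab.2, cd.1, cd.2) | ab <- digit_pairs, cd <- digit_pairs].

Definition vscale (l : nat) (v : vec) : vec :=
  let: (a, b, c, d) := v in (l * a %% 5, l * b %% 5, l * c %% 5, l * d %% 5).
Definition vadd (u v : vec) : vec :=
  let: (a, b, c, d) := u in let: (a', b', c', d') := v in
  ((a + a') %% 5, (b + b') %% 5, (c + c') %% 5, (d + d') %% 5).
Definition vdot (u v : vec) : nat :=
  let: (a, b, c, d) := u in let: (a', b', c', d') := v in a * a' + b * b' + c * c' + d * d'.

Definition lead (v : vec) : nat :=
  let: (a, b, c, d) := v in
  if a != 0 then a else if b != 0 then b else if c != 0 then c else d.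
Definition pivot (v : vec) : nat := find (fun c => c != 0) (coords v).

Definition PTS : seq vec := [seq v <- all_vecs | lead v == 1].

Definition normv (v : vec) : vec := vscale (nth 0 [:: 0; 1; 3; 2; 4] (lead v)) v.

(* The lines: the points spanned by the rows y, x of a 2x4 matrix in reduced
   echelon form, which lists every line exactly once.  (The lists P and L
   given as parameters here and below are shared, so that each is computed
   only once when the checks are evaluated.) *)
Definition echelon (x y : vec) : bool :=
  (pivot y < pivot x) && (nth 0 (coords y) (pivot x) == 0).
Definition span2 (x y : vec) : seq vec :=
  [seq vadd (vscale a x) (vscale b y) | a <- digits, b <- digits].
Definition line_of (x y : vec) : seq vec := undup [seq normv w | w <- span2 x y & w != v0].
Definition lines_of (P : seq vec) : seq (seq vec) :=
  [seq line_of xy.1 xy.2 | xy <- [seq (x, y) | x <- P, y <- P] & echelon xy.1 xy.2].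
Definition LNS : seq (seq vec) := lines_of PTS.

(* Incidence of a point with the plane of normal vector h (planes are
   represented by the points of the dual space). *)
Definition incv (u v : vec) : bool := vdot u v %% 5 == 0.

Lemma incvC u v : incv u v = incv v u.
Proof.
case: u => [[[a b] c] d]; case: v => [[[a' b'] c'] d'].
by rewrite /incv /vdot !(mulnC a) !(mulnC b) !(mulnC c) !(mulnC d).
Qed.

Definition sizes_ok (P : seq vec) (L : seq (seq vec)) :=
  [&& size P == 156, size L == 806 & uniq P].
Definition plane_size_ok (P : seq vec) := all (fun h => count (incv h) P == 31) P.
Definition line_size_ok (P : seq vec) (L : seq (seq vec)) :=
  all (fun l => count (mem l) P == 6) L.
Definition lines_in_points_ok (P : seq vec) (L : seq (seq vec)) :=
  all (fun l => uniq l && all (mem P) l) L.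
Definition join_ok (P : seq vec) (L : seq (seq vec)) :=
  all (fun x => let Lx := [seq l <- L | x \in l] in
    all (fun y => (x == y) || (count (fun l => y \in l) Lx == 1)) P) P.
Definition line_in_plane_ok (P : seq vec) (L : seq (seq vec)) :=
  all (fun l => all (fun h => all (incv h) l || (count (incv h) l <= 1)) P) L.
Definition pencil_ok (P : seq vec) (L : seq (seq vec)) :=
  all (fun l => let hs := [seq h <- P | all (incv h) l] in
    (size hs == 6) && all (fun x => (x \in l) || (count (incv^~ x) hs == 1)) P) L.

Definition reduced (v : vec) : bool := all (fun c => c < 5) (coords v).
Definition reduced_ok (P : seq vec) := all (fun v => reduced v && (v != v0)) P.
Definition multiple_ok (P : seq vec) := all (fun a => all (fun b => all (fun c => all (fun d =>
  ((a, b, c, d) == v0) || has (fun l => vscale l (a, b, c, d) \in P) [:: 1; 2; 3; 4])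
  digits) digits) digits) digits.
Definition proportional_ok (P : seq vec) :=
  all (fun x => all (fun y => (x == y) || ~~ has (fun l => vscale l y == x) digits) P) P.
Definition span_ok (L : seq (seq vec)) := all (fun l => if l is a :: b :: _ then
  all (fun c => has (fun al => has (fun be => vadd (vscale al a) (vscale be b) == c)
    digits) digits) l else false) L.

Lemma sizes_check : sizes_ok PTS LNS. Proof. by vm_compute. Qed.
Lemma plane_size_check : plane_size_ok PTS. Proof. by vm_compute. Qed.
Lemma line_size_check : line_size_ok PTS LNS. Proof. by vm_compute. Qed.
Lemma lines_in_points_check : lines_in_points_ok PTS LNS. Proof. by vm_compute. Qed.
Lemma join_check : join_ok PTS LNS. Proof. by vm_compute. Qed.
Lemma line_in_plane_check : line_in_plane_ok PTS LNS. Proof. by vm_compute. Qed.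
Lemma pencil_check : pencil_ok PTS LNS. Proof. by vm_compute. Qed.
Lemma reduced_check : reduced_ok PTS. Proof. by vm_compute. Qed.
Lemma multiple_check : multiple_ok PTS. Proof. by vm_compute. Qed.
Lemma proportional_check : proportional_ok PTS. Proof. by vm_compute. Qed.
Lemma span_check : span_ok LNS. Proof. by vm_compute. Qed.

(* From now on the lists are used only through these checks; keep them from
   being unfolded during unification. *)
Opaque PTS LNS.

Lemma size_PTS : size PTS = 156. Proof. by case/and3P: sizes_check => /eqP. Qed.
Lemma size_LNS : size LNS = 806. Proof. by case/and3P: sizes_check => _ /eqP. Qed.
Lemma uniq_PTS : uniq PTS. Proof. by case/and3P: sizes_check. Qed.

(* The model as an incidence structure on indices: points and planes are
   indexed by PTS, lines by LNS. *)
Definition pvec (p : 'I_156) : vec := nth v0 PTS p.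
Definition lpts (m : 'I_806) : seq vec := nth [::] LNS m.
Definition incc (p h : 'I_156) : bool := incv (pvec p) (pvec h).
Definition onlc (x : 'I_156) (m : 'I_806) : bool := pvec x \in lpts m.

Lemma card_nth (T : Type) (d : T) (s : seq T) n (Hs : size s = n) (Q : pred T) :
  #|[set i : 'I_n | Q (nth d s i)]| = count Q s.
Proof.
rewrite -sum1_card (eq_bigl (fun i : 'I_n => Q (nth d s i))) => [|i]; last by rewrite inE.
rewrite -(big_mkord (fun k => Q (nth d s k)) (fun _ => 1)) -Hs.
by rewrite -(big_nth d Q (fun _ => 1)) sum1_count.
Qed.

Lemma pvec_in p : pvec p \in PTS. Proof. by rewrite mem_nth // size_PTS. Qed.
Lemma lpts_in m : lpts m \in LNS. Proof. by rewrite mem_nth // size_LNS. Qed.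

Lemma pvec_inj : injective pvec.
Proof.
move=> p q E; apply/val_inj/eqP.
rewrite -(nth_uniq v0 _ _ uniq_PTS) ?size_PTS ?ltn_ord //.
by apply/eqP; exact: E.
Qed.

Lemma pvec_onto v : v \in PTS -> exists p, pvec p = v.
Proof.
move=> vP; have vi : index v PTS < 156 by rewrite -size_PTS index_mem.
by exists (Ordinal vi); rewrite /pvec nth_index.
Qed.

Lemma model_plane_size h : #|[set x | incc x h]| = 31.
Proof.
rewrite /incc (card_nth v0 size_PTS (fun v => incv v (pvec h))).
have /eqP <- := allP plane_size_check _ (pvec_in h).
by apply: eq_count => v; exact: incvC.
Qed.

Lemma model_planes_through_point p : #|[set h | incc p h]| = 31.
Proof.
rewrite /incc (card_nth v0 size_PTS (incv (pvec p))).
by have /eqP <- := allP plane_size_check _ (pvec_in p).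
Qed.

Lemma model_line_size m : #|[set x | onlc x m]| = 6.
Proof.
rewrite /onlc (card_nth v0 size_PTS (mem (lpts m))).
by apply/eqP; exact: (allP line_size_check _ (lpts_in m)).
Qed.

Lemma model_join_unique x y : x != y -> #|[set m | onlc x m && onlc y m]| = 1.
Proof.
move=> xy; rewrite /onlc (card_nth [::] size_LNS (fun l => (pvec x \in l) && (pvec y \in l))).
move/allP: (allP join_check _ (pvec_in x)) => /(_ _ (pvec_in y)).
rewrite (inj_eq pvec_inj) (negbTE xy) count_filter => /eqP <-.
by apply: eq_count => l; rewrite /= andbC.
Qed.

Lemma model_within m h : within incc onlc m h = all (incv^~ (pvec h)) (lpts m).
Proof.
apply/forallP/allP => [inh v vl|inh x].
  have /andP[_ /allP /(_ v vl) vP] := allP lines_in_points_check _ (lpts_in m).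
  by have [x xv] := pvec_onto vP; have := inh x; rewrite /onlc /incc xv vl.
by apply/implyP => xm; apply: inh.
Qed.

Lemma count_gt1 (T : eqType) (l : seq T) (P : pred T) a b :
  uniq l -> a \in l -> b \in l -> a != b -> P a -> P b -> 1 < count P l.
Proof.
move=> ul al bl ab Pa Pb; rewrite -size_filter.
have : size [:: a; b] <= size [seq x <- l | P x].
  apply: uniq_leq_size; first by rewrite /= inE ab.
  by move=> z; rewrite !inE mem_filter => /orP[] /eqP ->; rewrite ?Pa ?Pb.
by [].
Qed.

Lemma model_line_in_plane m h x y : x != y -> onlc x m -> onlc y m ->
  incc x h -> incc y h -> within incc onlc m h.
Proof.
move=> xy xm ym xh yh; rewrite model_within.
have /andP[ul _] := allP lines_in_points_check _ (lpts_in m).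
have /allP /(_ _ (pvec_in h)) /orP[all_h|] := allP line_in_plane_check _ (lpts_in m).
  by apply/allP => v vl; rewrite incvC (allP all_h).
rewrite /incc incvC in xh; rewrite /incc incvC in yh.
have := count_gt1 ul xm ym _ xh yh; rewrite (inj_eq pvec_inj) xy => /(_ isT).
by rewrite ltnNge => /negbTE ->.
Qed.

Lemma model_planes_through_line m : #|[set h | within incc onlc m h]| = 6.
Proof.
rewrite (eq_card (B := [set h | all (incv^~ (pvec h)) (lpts m)])) => [|h]; last first.
  by rewrite !inE model_within.
rewrite (card_nth v0 size_PTS (fun v => all (incv^~ v) (lpts m))).
have /andP[/eqP <- _] := allP pencil_check _ (lpts_in m).
by rewrite size_filter; apply: eq_count => v /=; apply: eq_all => u; exact: incvC.
Qed.

Lemma model_plane_of_line_point m x : ~~ onlc x m ->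
  #|[set h | within incc onlc m h && incc x h]| = 1.
Proof.
move=> xm.
rewrite (eq_card (B := [set h | all (incv^~ (pvec h)) (lpts m) && incv (pvec x) (pvec h)]));
  last by move=> h; rewrite !inE model_within.
rewrite (card_nth v0 size_PTS (fun v => all (incv^~ v) (lpts m) && incv (pvec x) v)).
have /andP[_ /allP /(_ _ (pvec_in x))] := allP pencil_check _ (lpts_in m).
rewrite /onlc in xm; rewrite (negbTE xm) orFb count_filter => /eqP <-.
apply: eq_count => v; rewrite /predI /= andbC incvC.
by congr (_ && _); apply: eq_all => u; exact: incvC.
Qed.

Import GRing.Theory.
Local Open Scope ring_scope.

Definition rowv (v : vec) : 'rV['F_5]_4 := \row_(i < 4) (nth 0%N (coords v) i)%:R.

Lemma prime5 : prime 5. Proof. by []. Qed.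

Lemma F5_nat_eq a b : (a%:R : 'F_5) = b%:R -> (a %% 5 = b %% 5)%N.
Proof. by move/(congr1 val) => /=; rewrite !(val_Fp_nat prime5). Qed.

Lemma F5_val (x : 'F_5) : x = (val x)%:R.
Proof. by rewrite natr_Zp. Qed.

Lemma F5_mod n : ((n %% 5)%N%:R : 'F_5) = n%:R.
Proof. exact: (Fp_nat_mod prime5). Qed.

Lemma rowv_scale l v : rowv (vscale l v) = (l%:R : 'F_5) *: rowv v.
Proof.
case: v => [[[a b] c] d]; apply/rowP => j; rewrite !mxE.
by case: j => [[|[|[|[|j]]]] Hj] //=; rewrite F5_mod natrM.
Qed.

Lemma rowv_add u v : rowv (vadd u v) = rowv u + rowv v.
Proof.
case: u => [[[a b] c] d]; case: v => [[[a' b'] c'] d']; apply/rowP => j; rewrite !mxE.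
by case: j => [[|[|[|[|j]]]] Hj] //=; rewrite F5_mod natrD.
Qed.

Lemma rowv_dot u v : (rowv u *m (rowv v)^T) 0 0 = (vdot u v)%:R.
Proof.
case: u => [[[a b] c] d]; case: v => [[[a' b'] c'] d'].
by rewrite !mxE !big_ord_recr big_ord0 /= !mxE /= !natrD !natrM add0r.
Qed.

Lemma rowv_inj u w : reduced u -> reduced w -> rowv u = rowv w -> u = w.
Proof.
case: u => [[[a b] c] d]; case: w => [[[a' b'] c'] d'] /and5P[? ? ? ? _] /and5P[? ? ? ? _].
move/rowP => E.
have := E (@Ordinal 4 0 isT); have := E (@Ordinal 4 1 isT);
have := E (@Ordinal 4 2 isT); have := E (@Ordinal 4 3 isT).
rewrite !mxE /= => /F5_nat_eq E3 /F5_nat_eq E2 /F5_nat_eq E1 /F5_nat_eq E0.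
by move: E0 E1 E2 E3; rewrite !modn_small // => -> -> -> ->.
Qed.

Lemma reduced_scale l v : reduced (vscale l v).
Proof. by case: v => [[[a b] c] d]; rewrite /reduced /= !ltn_pmod. Qed.

Lemma reduced_pvec p : reduced (pvec p).
Proof. by case/andP: (allP reduced_check _ (pvec_in p)). Qed.

Lemma rowv_v0 : rowv v0 = 0.
Proof. by apply/rowP => -[[|[|[|[|j]]]] Hj]; rewrite !mxE. Qed.

Lemma rowv_pvec_neq0 p : rowv (pvec p) != 0.
Proof.
case/andP: (allP reduced_check _ (pvec_in p)) => red; apply: contra => /eqP E.
by apply/eqP/rowv_inj; rewrite ?red // E rowv_v0.
Qed.

Lemma rowv_val (v : 'rV['F_5]_4) :
  rowv (val (v 0 0), val (v 0 1), val (v 0 2), val (v 0 3)) = v.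
Proof.
apply/rowP => j; rewrite !mxE.
by case: j => [[|[|[|[|j]]]] Hj] //=; rewrite -F5_val; congr (v _ _); apply: val_inj.
Qed.

Lemma F5_unit l : (0 < l < 5)%N -> (l%:R : 'F_5) != 0.
Proof.
move=> l5; apply/eqP => /(F5_nat_eq (b := 0)); rewrite mod0n modn_small; last by case/andP: l5.
by move=> l0; rewrite l0 in l5.
Qed.

(* The points, planes and lines of the model as subspaces of F_5^4: a plane
   is the orthogonal of its normal vector, a line the sum of its points. *)
Definition pt (p : 'I_156) : 'M['F_5]_4 := <<rowv (pvec p)>>%MS.
Definition pl (h : 'I_156) : 'M['F_5]_4 := <<kermx (rowv (pvec h))^T>>%MS.
Definition ln (m : 'I_806) : 'M['F_5]_4 := <<(\sum_(x | onlc x m) pt x)%MS>>%MS.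

Lemma incident_pt_pl p h : incident (pt p) (pl h) = incc p h.
Proof.
rewrite /incident /pt /pl !genmxE sub_kermx.
set M := rowv (pvec p) *m (rowv (pvec h))^T.
have -> : (M == 0) = (M 0 0 == 0).
  by apply/eqP/eqP => [->|E]; [rewrite mxE | apply/rowP => i; rewrite ord1 E mxE].
by rewrite rowv_dot -val_eqE /= (val_Fp_nat prime5).
Qed.

Lemma pt_point p : pt p \in PGpoints 'F_5.
Proof. by rewrite inE /pt genmx_id eqxx /= genmxE rank_rV rowv_pvec_neq0. Qed.

Lemma pl_plane h : pl h \in PGplanes 'F_5.
Proof.
by rewrite inE /pl genmx_id eqxx /= genmxE mxrank_ker mxrank_tr rank_rV rowv_pvec_neq0.
Qed.

Lemma pt_inj : injective pt.
Proof.
move=> p q E.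
have : (rowv (pvec p) <= rowv (pvec q))%MS by rewrite -genmxE -/(pt p) E genmxE.
case/sub_rVP => x px.
have pq : pvec p = vscale (val x) (pvec q).
  by apply: rowv_inj; rewrite ?reduced_pvec ?reduced_scale // rowv_scale -F5_val.
have /allP /(_ _ (pvec_in q)) /orP[/eqP /pvec_inj //|] := allP proportional_check _ (pvec_in p).
by move/hasPn => /(_ (val x)); rewrite mem_iota ltn_ord pq eqxx => /(_ isT).
Qed.

Lemma pt_onto A : A \in PGpoints 'F_5 -> exists p, A = pt p.
Proof.
rewrite inE => /andP[/eqP gA /eqP rA].
set v := nz_row A.
have v_nz : v != 0 by rewrite nz_row_eq0; apply/eqP => A0; move: rA; rewrite A0 mxrank0.
have /eqmxP vA : (v == A)%MS by rewrite -(mxrank_leqif_eq (nz_row_sub A)).2 rank_rV v_nz rA.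
have Av : A = <<v>>%MS by rewrite -gA; apply: eq_genmx; apply: eqmx_sym.
have := multiple_check.
move=> /allP /(_ (val (v 0 0))); rewrite mem_iota ltn_ord => /(_ isT).
move=> /allP /(_ (val (v 0 1))); rewrite mem_iota ltn_ord => /(_ isT).
move=> /allP /(_ (val (v 0 2))); rewrite mem_iota ltn_ord => /(_ isT).
move=> /allP /(_ (val (v 0 3))); rewrite mem_iota ltn_ord => /(_ isT).
case/orP => [/eqP v0E|/hasP [l l14 lP]].
  by move: v_nz; rewrite -(rowv_val v) v0E rowv_v0 eqxx.
have [p pE] := pvec_onto lP.
exists p; rewrite Av /pt pE rowv_scale rowv_val; apply: eq_genmx; apply: eqmx_sym.
by apply: eqmx_scale; apply: F5_unit; move: l14; rewrite !inE => /or4P[] /eqP ->.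
Qed.

Lemma incident_pt_ln y m : incident (pt y) (ln m) = onlc y m.
Proof.
rewrite /incident /ln (genmxE (\sum_(x | onlc x m) pt x)%MS).
apply/idP/idP => [yln|ym]; last exact: (sumsmx_sup y) ym (submx_refl _).
apply/negPn/negP => ym.
(* 6 planes contain m but only one of them y, so some such plane misses y *)
have [h /andP[mh yh]] : exists h, within incc onlc m h && ~~ incc y h.
  apply/existsP; apply: contraT; rewrite negb_exists => /forallP none.
  have : [set h | within incc onlc m h] \subset [set h | within incc onlc m h && incc y h].
    by apply/subsetP => h; rewrite !inE => mh; rewrite mh /=; have := none h; rewrite mh negbK.
  by move/subset_leq_card; rewrite model_planes_through_line model_plane_of_line_point.
have : (\sum_(x | onlc x m) pt x <= pl h)%MS.
  by apply/sumsmx_subP => x xm; rewrite -/(incident _ _) incident_pt_pl (withinP mh xm).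
by move/(submx_trans yln); rewrite -/(incident _ _) incident_pt_pl (negbTE yh).
Qed.

Lemma line_spanned m : exists a b, [/\ a != b, onlc a m, onlc b m &
  forall x, onlc x m -> (pt x <= pt a + pt b)%MS].
Proof.
have := allP span_check _ (lpts_in m).
have /andP[ul lP] := allP lines_in_points_check _ (lpts_in m).
case El: (lpts m) ul lP => [|va [|vb r]] // ul lP sp.
have [a aE] := pvec_onto (allP lP va (mem_head _ _)).
have vbl : vb \in [:: va, vb & r] by rewrite !inE eqxx orbT.
have [b bE] := pvec_onto (allP lP vb vbl).
exists a, b; split.
- by apply: contraTneq ul => ab; rewrite /= -aE -bE ab inE eqxx.
- by rewrite /onlc aE El mem_head.
- by rewrite /onlc bE El.
move=> x; rewrite /onlc El => /(allP sp) /hasP [al _ /hasP [be _ /eqP xE]].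
rewrite /pt genmxE -xE rowv_add !rowv_scale.
by apply: addmx_sub_adds; apply: scalemx_sub; rewrite genmxE -?aE -?bE.
Qed.

Lemma rank_pt (x : 'I_156) : \rank (pt x) = 1%N.
Proof. by rewrite /pt genmxE rank_rV rowv_pvec_neq0. Qed.

Lemma rank_pt_add a b : a != b -> \rank (pt a + pt b)%MS = 2%N.
Proof.
move=> ab; have le2 : (\rank (pt a + pt b) <= 2)%N.
  by have := (mxrank_adds_leqif (pt a) (pt b)).1; rewrite !rank_pt.
have ge1 : (1 <= \rank (pt a + pt b))%N.
  by have := mxrankS (addsmxSl (pt a) (pt b)); rewrite rank_pt.
suff : \rank (pt a + pt b) != 1%N by lia.
apply: contra ab => /eqP r1.
have /eqmxP Ea : (pt a == pt a + pt b)%MS by rewrite -(mxrank_leqif_eq (addsmxSl _ _)).2 rank_pt r1.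
have /eqmxP Eb : (pt b == pt a + pt b)%MS by rewrite -(mxrank_leqif_eq (addsmxSr _ _)).2 rank_pt r1.
have /genmxP : (pt a == pt b)%MS by apply/eqmxP; exact: eqmx_trans Ea (eqmx_sym Eb).
by rewrite /pt !genmx_id => /pt_inj ->.
Qed.

Lemma ln_line m : ln m \in PGlines 'F_5.
Proof.
rewrite inE /ln genmx_id eqxx /= genmxE.
have [a [b [ab am bm span_ab]]] := line_spanned m.
apply/eqP; rewrite -[RHS](rank_pt_add ab); apply/eqmx_rank/andP; split.
  by apply/sumsmx_subP => x; exact: span_ab.
by rewrite addsmx_sub (sumsmx_sup a am (submx_refl _)) (sumsmx_sup b bm (submx_refl _)).
Qed.

Lemma ln_inj : injective ln.
Proof.
move=> m1 m2 E; have [a [b [ab am1 bm1 _]]] := line_spanned m1.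
have on2 x : onlc x m1 -> onlc x m2 by rewrite -!incident_pt_ln E.
exact: (line_uniq model_join_unique ab am1 bm1 (on2 _ am1) (on2 _ bm1)).
Qed.

Local Close Scope ring_scope.

Lemma points_image (S : {set 'M['F_5]_4}) : S \subset PGpoints 'F_5 ->
  S = pt @: [set p | pt p \in S].
Proof.
move=> SP; apply/setP => A; apply/idP/imsetP => [AS|[p + ->]]; last by rewrite inE.
by have [p Ap] := pt_onto (subsetP SP _ AS); exists p; rewrite // inE -Ap.
Qed.

Lemma onsub_image (T : {set 'I_156}) h :
  onsub (pt @: T) (pl h) = pt @: [set x in T | incc x h].
Proof.
apply/setP => A; rewrite inE; apply/andP/imsetP => [[/imsetP [x xT ->]]|[x]].
  by rewrite incident_pt_pl => xh; exists x; rewrite // inE xT.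
by rewrite inE => /andP[xT xh] ->; split; [apply: imset_f | rewrite incident_pt_pl].
Qed.

(* Transport S to the model, apply cylinder_structure and transport the five
   lines back. *)
Theorem mainTheorem17 (S : {set 'M['F_5]_4}) :
  S \subset PGpoints 'F_5 ->
  #|S| = 25 ->
  spanning S ->
  divisible 5 S ->
  cylinder 5 S.
Proof.
move=> SP S25 _ divS.
set T := [set p | pt p \in S]; have ST : S = pt @: T := points_image SP.
have T25 : #|T| = 25 by rewrite -(card_imset _ pt_inj) -ST.
have divT h : 5 %| #|[set x in T | incc x h]|.
  have := divS _ (pl_plane h); rewrite S25 {1}ST onsub_image (card_imset _ pt_inj).
  by move=> E; rewrite /dvdn E.
have [C [ms [ms_inj Cms TE]]] := cylinder_structure model_plane_size
  model_planes_through_point model_line_size model_join_unique model_line_in_plane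
  model_planes_through_line model_plane_of_line_point T25 divT.
exists (pt C), (fun i => ln (ms i)); split.
- exact: pt_point.
- by move=> i; exact: ln_line.
- by move=> i j /ln_inj /ms_inj.
- by move=> i; rewrite incident_pt_ln.
apply/setP => A; rewrite inE; have [/pt_onto [y ->]|AP] := boolP (A \in PGpoints 'F_5).
  have := TE y; rewrite inE => ->; rewrite (inj_eq pt_inj).
  by congr (_ && _); apply: eq_existsb => i; rewrite incident_pt_ln.
by apply: contraNF AP; exact: (subsetP SP A).
Qed.
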